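(* Fix $i$ with $0\le i\le\rho(m)-1$. Define the sequence $(v^{\alpha_i}(n))_{n\ge0}$ by $v^{\alpha_i}(j)=x^{\alpha_i}(j+1)$ for $0\le j\le k-2$, $v^{\alpha_i}(k-1)=1-x^{\alpha_i}(k)$, and $v^{\alpha_i}(n)=\mathbf 1\big[\sum_{j=1}^k\bar a_j v^{\alpha_i}(n-j)-\bar\theta\big]$ for $n\ge k$. Then for every $t\ge k$: (a) $v^{\alpha_i}(t)=0$; (b) $\sum_{j=1}^k\bar a_j v^{\alpha_i}(t-j)\le\bar\theta-2$; and (c) the sequence $v^{\alpha_i}$ has transient length $k-p_i$ and cycle length $1$ (it is eventually the constant sequence $0$).
   Context: For $u\in\mathbb{R}$ let $\mathbf 1[u]=1$ if $u\ge 0$ and $\mathbf 1[u]=0$ if $u<0$. For a $\{0,1\}$-valued sequence $(s(n))_{n\ge0}$ that is eventually periodic, its transient length is the least $T\ge0$ such that there is $P\ge1$ with $s(n+P)=s(n)$ for all $n\ge T$, and its cycle length is the least such $P$ (for that $T$). Let $m$ be a positive integer and let $\rho(m)$ denote the number of primes $p$ with $2m<p<3m$; assume $\rho(m)\ge 2$. List these primes as $p_0>p_1>\dots>p_{\rho(m)-1}$ and put $\alpha_i=3m-p_i$. Let $k=(6m-1)\rho(m)$, $\mu_i=\lfloor k/p_i\rfloor$, $\beta_i=k-p_i\mu_i$. Define weights $\bar a_j$, $1\le j\le k$: if $\rho(m)$ is even, $\bar a_j=2$ if $j=\ell p_i$ for some $i$ and some $\ell$ with $1\le \ell\le 3\rho(m)/2$,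 $\bar a_j=-2$ if $j=\ell p_i$ with $3\rho(m)/2<\ell\le 2\rho(m)$, and $\bar a_j=0$ otherwise; if $\rho(m)$ is odd, $\bar a_j=2$ if $j=\ell p_i$ with $1\le\ell\le (3\rho(m)-1)/2$, $\bar a_j=-2$ if $j=\ell p_i$ with $(3\rho(m)+1)/2\le \ell\le 2\rho(m)-2$, $\bar a_j=-1$ if $j=\ell p_i$ with $\ell\in\{2\rho(m)-1,2\rho(m)\}$, and $\bar a_j=0$ otherwise (well defined since the sets $\{\ell p_i:1\le\ell\le2\rho(m)\}$ are pairwise disjoint). Let $\bar\theta=2\rho(m)$. For each $i$ define $x^{\alpha_i}(t)$ for $0\le t\le k-1$ by $x^{\alpha_i}(t)=1$ if $t=\beta_i+\ell p_i$ for some $0\le \ell\le\mu_i-1$ and $x^{\alpha_i}(t)=0$ otherwise, and for $t\ge k$ by $x^{\alpha_i}(t)=\mathbf 1\big[\sum_{j=1}^k \bar a_j x^{\alpha_i}(t-j)-\bar\theta\big]$. *)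

From mathcomp Require Import all_boot all_order all_algebra.
Set Implicit Arguments. Unset Strict Implicit. Unset Printing Implicit Defensive.
Import Order.TTheory GRing.Theory Num.Theory.

(* primes p with 2m < p < 3m, listed in DECREASING order p_0 > p_1 > ... *)
Definition primes_between (m : nat) : seq nat :=
  rev (filter prime (iota (2 * m).+1 (m.-1))).

Definition rho (m : nat) : nat := size (primes_between m).

Definition pr (m i : nat) : nat := nth 0 (primes_between m) i.
Definition alpha (m i : nat) : nat := 3 * m - pr m i.

Definition kk (m : nat) : nat := (6 * m - 1) * rho m.
Definition mu (m i : nat) : nat := kk m %/ pr m i.
Definition beta (m i : nat) : nat := kk m - pr m i * mu m i.

(* weight attached to j = l * p_i, 1 <= l <= 2 rho *)
Definition wt (r l : nat) : int :=
  if ~~ odd r then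
    (if l <= (3 * r)./2 then Posz 2 else (-2)%R)
  else
    (if l <= (3 * r - 1)./2 then Posz 2
     else if ((3 * r + 1)./2 <= l) && (l <= 2 * r - 2) then (-2)%R
     else (-1)%R).

(* abar_j : weight if j = l * p_i with some i < rho and 1 <= l <= 2 rho,
   0 otherwise (the sets {l p_i} are pairwise disjoint, so the choice of
   the first such p_i is immaterial). *)
Definition abar (m j : nat) : int :=
  let ok p := [&& p %| j, 1 <= j %/ p & j %/ p <= 2 * rho m] in
  let ps := primes_between m in
  let idx := find ok ps in
  if idx < size ps then wt (rho m) (j %/ nth 0 ps idx) else 0%R.

Definition thetabar (m : nat) : int := Posz (2 * rho m).

Definition ind (u : int) : bool := (0 <= u)%R.

Definition wsum (m : nat) (s : nat -> bool) (n : nat) : int :=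
  \big[+%R/0%R]_(1 <= j < (kk m).+1) (abar m j * Posz (s (n - j)%N : nat))%R.

(* history: values s(0), ..., s(n-1) of the threshold sequence with
   initial values init(t) for t < k and recurrence
   s(t) = 1[sum_j abar_j s(t-j) - theta] for t >= k *)
Fixpoint hist (m : nat) (init : nat -> bool) (n : nat) : seq bool :=
  match n with
  | 0 => [::]
  | n'.+1 =>
      let h := hist m init n' in
      rcons h (if n' < kk m then init n'
               else ind (wsum m (fun t => nth false h t) n' - thetabar m)%R)
  end.

Definition thr_seq (m : nat) (init : nat -> bool) (n : nat) : bool :=
  nth false (hist m init n.+1) n.

Definition x_init (m i : nat) (t : nat) : bool :=
  has (fun l => t == beta m i + l * pr m i) (iota 0 (mu m i)).
Definition xseq (m i : nat) : nat -> bool := thr_seq m (x_init m i).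

Definition v_init (m i : nat) (j : nat) : bool :=
  if j <= kk m - 2 then xseq m i j.+1
  else ~~ xseq m i (kk m).
Definition vseq (m i : nat) : nat -> bool := thr_seq m (v_init m i).

Definition periodic_from (s : nat -> bool) (T P : nat) : Prop :=
  0 < P /\ forall n, T <= n -> s (n + P) = s n.

Definition transient_length (s : nat -> bool) (T : nat) : Prop :=
  (exists P, periodic_from s T P) /\
  forall T', (exists P, periodic_from s T' P) -> T <= T'.

Definition cycle_length (s : nat -> bool) (P : nat) : Prop :=
  exists T, transient_length s T /\ periodic_from s T P /\
    forall P', periodic_from s T P' -> P <= P'.

From mathcomp Require Import all_boot all_order all_algebra.
From mathcomp Require Import zify.
Import Order.TTheory GRing.Theory Num.Theory.
Set Implicit Arguments. Unset Strict Implicit. Unset Printing Implicit Defensive.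

(* 1. The weight abar_j is wt_l at j = l p_j' (1 <= l <= 2 rho) and 0 elsewhere;
      these multiples are pairwise distinct since every p_j' > 2 rho is prime.
      Hence the weighted sum splits as a sum over primes p_j' of the weights
      wt_l times the value l p_j' steps back (wsumE).
   2. The weights wt_1..wt_2rho add up to the threshold 2 rho, and any proper
      tail of them to at most 2 rho - 2 (sum_wt, sum_wt_tail).
   3. On [0, k) the ones of x are the positions k - a with p_i | a; so x(k) = 1
      (the window sees exactly the multiples of p_i), and v(n) = 1 for n < k
      iff p_i | k - n - 1 > 0 (vseq_below).
   4. By strong induction on t >= k: if v vanishes on [k, t), the ones seen by
      the window at t are the multiples l p_j' lying in the residue class of
      d = t + 1 - k mod p_i above d.  If p_i | d these are the l p_i with
      l > d / p_i; otherwise each p_j', j' <> i, contributes at most one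
      multiple.  Either way the sum is at most 2 rho - 2 (hit_wsum_total),
      so v(t) = 0.
   5. v is 1 at k - p_i - 1 and 0 from k - p_i on, which gives the transient
      and cycle lengths (eventually_zero_lengths). *)

Lemma size_hist m init n : size (hist m init n) = n.
Proof. by elim: n => //= n IH; rewrite size_rcons IH. Qed.

Lemma nth_hist m init n t :
  t < n -> nth false (hist m init n) t = thr_seq m init t.
Proof.
elim: n => // n IH; rewrite ltnS leq_eqVlt => /orP [/eqP -> // | lt].
by rewrite /= nth_rcons size_hist lt IH.
Qed.

Lemma thr_seqE m (k0 : 0 < kk m) init n : thr_seq m init n =
  if n < kk m then init n else ind (wsum m (thr_seq m init) n - thetabar m)%R.
Proof.
rewrite /thr_seq /= nth_rcons size_hist ltnn eqxx.
case: ifP => // hn; congr (ind (_ - _)%R).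
by apply: eq_big_nat => j /andP [j1 _]; rewrite nth_hist //; lia.
Qed.

Lemma pr_spec m i : i < rho m ->
  [/\ prime (pr m i), 2 * m < pr m i & pr m i < 3 * m].
Proof.
move=> hi; have : pr m i \in primes_between m by apply: mem_nth.
rewrite /primes_between mem_rev mem_filter mem_iota => /andP [pp /andP [a b]].
by split => //; lia.
Qed.

Lemma pr_inj m i j : i < rho m -> j < rho m -> pr m i = pr m j -> i = j.
Proof.
move=> hi hj e; apply/eqP.
have uq : uniq (primes_between m).
  by rewrite /primes_between rev_uniq filter_uniq // iota_uniq.
by rewrite -(nth_uniq 0 hi hj uq) -/(pr m i) -/(pr m j) e.
Qed.

(* Every prime p_j exceeds 2 rho(m), the largest multiplier l in abar
   (there are at most m - 1 candidates in (2m, 3m)). *)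
Lemma pr_gt_2rho m j : j < rho m -> 2 * rho m < pr m j.
Proof.
move=> hj; have [_ h _] := pr_spec hj.
suff : rho m <= m.-1 by lia.
rewrite /rho /primes_between size_rev size_filter.
by rewrite (leq_trans (count_size _ _)) // size_iota.
Qed.

Lemma mul_pr_le_kk m j l : j < rho m -> l <= 2 * rho m -> l * pr m j <= kk m.
Proof.
move=> hj hl; have [_ _ h] := pr_spec hj; rewrite /kk.
have : l * pr m j <= 2 * rho m * (3 * m - 1) by apply: leq_mul; lia.
by move/leq_trans; apply; nia.
Qed.

Lemma pr_dvd_mul m i j l : i < rho m -> j < rho m -> 0 < l < pr m i ->
  (pr m i %| l * pr m j) = (i == j).
Proof.
move=> hi hj /andP [l0 lp]; have [pi _ _] := pr_spec hi; have [pj _ _] := pr_spec hj.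
rewrite Euclid_dvdM // (dvdn_prime2 pi pj).
have -> : (pr m i %| l) = false by apply/negP => /(dvdn_leq l0); lia.
by apply/eqP/eqP => [/(pr_inj hi hj)|->].
Qed.

Lemma mul_pr_uniq m i j a b : i < rho m -> j < rho m ->
  0 < a <= 2 * rho m -> 0 < b <= 2 * rho m ->
  a * pr m i = b * pr m j -> i = j /\ a = b.
Proof.
move=> hi hj ha hb e.
have ij : i = j.
  apply/eqP; rewrite -(pr_dvd_mul hi hj (l := b)); last by have := pr_gt_2rho hi; lia.
  by rewrite -e dvdn_mull.
have [pj _ _] := pr_spec hj; have := prime_gt0 pj.
by move: e; rewrite ij; split => //; nia.
Qed.

Lemma count_le1 (T : eqType) (P : pred T) (s : seq T) : uniq s ->
  {in s &, forall y z, P y -> P z -> y = z} -> count P s <= 1.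
Proof.
move=> us hP; rewrite -size_filter; case E: (filter P s) => [//|y t].
have uq : uniq (y :: t) by rewrite -E filter_uniq.
have /andP [Py ys] : P y && (y \in s) by rewrite -mem_filter E mem_head.
suff : {subset y :: t <= [:: y]} by move/(uniq_leq_size uq).
move=> z; rewrite -E mem_filter inE => /andP [Pz zs]; apply/eqP.
exact: hP.
Qed.

Lemma count_abar_divisor m j :
  count (fun p => [&& p %| j, 1 <= j %/ p & j %/ p <= 2 * rho m]) (primes_between m) <= 1.
Proof.
set ps := primes_between m.
apply: count_le1 => [|y z yp zp /and3P [dy y1 y2] /and3P [dz z1 z2]].
  by rewrite rev_uniq filter_uniq // iota_uniq.
have iy : index y ps < rho m by rewrite index_mem.
have iz : index z ps < rho m by rewrite index_mem.
have e : j %/ y * pr m (index y ps) = j %/ z * pr m (index z ps).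
  by rewrite /pr !nth_index // !divnK.
have ay : 0 < j %/ y <= 2 * rho m by rewrite y1.
have az : 0 < j %/ z <= 2 * rho m by rewrite z1.
have [eyz _] := mul_pr_uniq iy iz ay az e.
by rewrite -(nth_index 0 yp) -(nth_index 0 zp) eyz.
Qed.

Section WeightDecomposition.
Local Open Scope ring_scope.

Lemma sum_nat_point (R : nmodType) (a b c : nat) (F : nat -> R) : (a <= c < b)%N ->
  \sum_(a <= j < b) (if j == c then F j else 0) = F c.
Proof.
move=> hc; rewrite (bigD1_seq c) ?mem_index_iota ?iota_uniq //= eqxx.
by rewrite big1 ?addr0 // => j /negbTE ->.
Qed.

Lemma sum_nat_mul_pick (R : nmodType) (a b q j : nat) (F : nat -> R) : (0 < q)%N ->
  \sum_(a <= l < b) (if j == (l * q)%N then F l else 0) =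
  if [&& q %| j, a <= j %/ q & j %/ q < b]%N then F (j %/ q)%N else 0.
Proof.
move=> q0; have [dj|ndj] /= := boolP (q %| j)%N; last first.
  by rewrite big1 // => l _; case: eqP => // e; case/negP: ndj; rewrite e dvdn_mull.
under eq_bigr => l _ do rewrite -{1}(divnK dj) eqn_pmul2r // eq_sym.
case: ifP => [/andP[hl hr]|hn]; first by rewrite sum_nat_point ?hl.
rewrite big_seq big1 // => l; rewrite mem_index_iota => hl.
by case: eqP => // el; rewrite -el hl in hn.
Qed.

Lemma find_unique_sum (T : eqType) (R : nmodType) (x0 : T) (P : pred T)
    (G : T -> R) (s : seq T) : (count P s <= 1)%N ->
  (if (find P s < size s)%N then G (nth x0 s (find P s)) else 0) =
  \sum_(x <- s) (if P x then G x else 0).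
Proof.
elim: s => [|x s IH]; first by rewrite big_nil.
rewrite /= big_cons; have [Px|nPx] /= := boolP (P x); last first.
  by rewrite add0r ltnS => /IH.
rewrite add1n ltnS leqNgt -has_count => /hasPn hn.
by rewrite big_seq big1 ?addr0 // => y /hn /negbTE ->.
Qed.

Lemma abarE (m j : nat) : abar m j =
  \sum_(i' < rho m) \sum_(1 <= l < (2 * rho m).+1)
     (if j == (l * pr m i')%N then wt (rho m) l else 0).
Proof.
under eq_bigr => i' _.
  rewrite sum_nat_mul_pick; last by have [/prime_gt0] := pr_spec (ltn_ord i').
  rewrite ltnS; over.
rewrite /abar /= (find_unique_sum 0 (fun q => wt (rho m) (j %/ q)%N) (count_abar_divisor m j)).
by rewrite (big_nth 0) big_mkord.
Qed.

Definition wsum_by_prime (m : nat) (s : nat -> bool) (n : nat) : int :=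
  \sum_(i' < rho m) \sum_(1 <= l < (2 * rho m).+1)
     wt (rho m) l * Posz (s (n - l * pr m i')%N).

Lemma wsumE m s n : wsum m s n = wsum_by_prime m s n.
Proof.
rewrite /wsum /wsum_by_prime.
under eq_bigr => j _ do rewrite abarE mulr_suml.
rewrite exchange_big; apply: eq_bigr => i' _.
under eq_bigr => j _ do rewrite mulr_suml.
rewrite exchange_big; apply: eq_big_nat => l /andP [l1 l2].
have [/prime_gt0 p0 _ _] := pr_spec (ltn_ord i').
rewrite -(@sum_nat_point _ 1 (kk m).+1 (l * pr m i') (fun j => wt (rho m) l * Posz (s (n - j)%N))).
  by apply: eq_bigr => j _; case: eqP => [->|]; rewrite ?mul0r.
by rewrite ltnS mul_pr_le_kk ?muln_gt0 ?l1 ?p0 //; lia.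
Qed.
End WeightDecomposition.

Section Weights.
Local Open Scope ring_scope.

Definition n_pos_wt (r : nat) : nat :=
  if ~~ odd r then (3 * r)./2 else (3 * r - 1)./2.

Lemma wt_pos r l : (l <= n_pos_wt r)%N -> wt r l = 2.
Proof. by rewrite /wt /n_pos_wt; case: (odd r) => /= ->. Qed.

Lemma wt_nonpos r l : (n_pos_wt r < l)%N -> wt r l <= 0.
Proof.
rewrite /wt /n_pos_wt; case: (odd r) => /= h; rewrite leqNgt h //.
by case: ifP.
Qed.

Lemma wt_le2 r l : wt r l <= 2.
Proof.
case: (leqP l (n_pos_wt r)) => h; first by rewrite wt_pos.
by have := wt_nonpos h; lia.
Qed.

Lemma n_pos_wt_bounds r : (2 <= r)%N -> (1 <= n_pos_wt r < 2 * r)%N.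
Proof. by rewrite /n_pos_wt; case: (odd r) => /= r2; lia. Qed.

Lemma sum_nat_const (a b : nat) (F : nat -> int) (x : int) :
  (forall l, (a <= l < b)%N -> F l = x) -> \sum_(a <= l < b) F l = x *+ (b - a).
Proof. by move=> h; rewrite (eq_big_nat _ _ h) sumr_const_nat. Qed.

Lemma sum_wt_prefix r c : (c <= n_pos_wt r)%N -> \sum_(1 <= l < c.+1) wt r l = 2 *+ c.
Proof.
move=> h; rewrite (@sum_nat_const _ _ _ 2) ?subn1 // => l /andP [_ hl].
by apply: wt_pos; lia.
Qed.

Lemma sum_wt r : (2 <= r)%N -> \sum_(1 <= l < (2 * r).+1) wt r l = Posz (2 * r).
Proof.
move=> r2; have hb := n_pos_wt_bounds r2.
rewrite (@big_cat_nat _ _ _ (n_pos_wt r).+1) //= ?sum_wt_prefix //; try lia.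
rewrite /n_pos_wt in hb *; case: (boolP (odd r)) => ho /= in hb *.
  rewrite (@big_cat_nat _ _ _ (2 * r - 1)) //=; try lia.
  rewrite (@sum_nat_const _ _ _ (-2)); last first.
    by move=> l /andP [h1 h2]; rewrite /wt ho /= ifF ?ifT //; lia.
  rewrite (@sum_nat_const _ _ _ (-1)); last first.
    by move=> l /andP [h1 h2]; rewrite /wt ho /= !ifF //; lia.
  lia.
rewrite (@sum_nat_const _ _ _ (-2)); last first.
  by move=> l /andP [h1 h2]; rewrite /wt (negbTE ho) /= ifF //; lia.
lia.
Qed.

Lemma sum_wt_tail r c : (2 <= r)%N -> (1 <= c)%N ->
  \sum_(1 <= l < (2 * r).+1) wt r l * Posz (c < l)%N <= Posz (2 * r) - 2.
Proof.
move=> r2 c1; have hb := n_pos_wt_bounds r2.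
case: (leqP (n_pos_wt r) c) => hc.
  apply: le_trans (_ : 0 <= _); last by lia.
  apply: sumr_le0 => l _; case: (ltnP c l) => h; rewrite ?mulr0 // mulr1.
  by apply: wt_nonpos; lia.
rewrite (@big_cat_nat _ _ _ c.+1) //=; try lia.
rewrite big_nat big1 ?add0r; last first.
  by move=> l /andP [_ h]; rewrite ltnNge -ltnS h mulr0.
rewrite (eq_big_nat _ _ (F2 := wt r)); last by move=> l /andP [h _]; rewrite h mulr1.
have := sum_wt r2; rewrite (@big_cat_nat _ _ _ c.+1) //= ?sum_wt_prefix; try lia.
move: (\sum_(c.+1 <= l < (2 * r).+1) wt r l) => S; lia.
Qed.
End Weights.

Section SumBounds.
Local Open Scope ring_scope.

Lemma sum_ord_bound r (i0 : 'I_r) (S : 'I_r -> int) (y z : int) :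
  S i0 <= y -> (forall j, j != i0 -> S j <= z) -> \sum_(j < r) S j <= y + z *+ (r - 1).
Proof.
move=> h0 hz; rewrite (bigD1 i0) //=; apply: lerD => //.
apply: le_trans (_ : \sum_(j < r | j != i0) z <= _); first exact: ler_sum.
by rewrite sumr_const cardC1 card_ord subn1.
Qed.

Lemma sum_le_one_active (a b : nat) (F : nat -> int) (G : pred nat) (x : int) :
  0 <= x ->
  (forall l1 l2, (a <= l1 < b)%N -> (a <= l2 < b)%N -> G l1 -> G l2 -> l1 = l2) ->
  (forall l, (a <= l < b)%N -> F l <= (if G l then x else 0)) ->
  \sum_(a <= l < b) F l <= x.
Proof.
move=> x0 hu hF.
have [/hasP [l0 hl0 g0] | /hasPn hn] := boolP (has G (index_iota a b)); last first.
  apply: le_trans x0; rewrite big_seq; apply: sumr_le0 => l hl.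
  by have := hF l; rewrite -mem_index_iota (negbTE (hn l hl)); apply.
rewrite (bigD1_seq l0) ?iota_uniq //= -[x]addr0.
apply: lerD; first by have := hF l0; rewrite -mem_index_iota g0; apply.
rewrite big_seq_cond; apply: sumr_le0 => l /andP [hl ne]; have := hF l; rewrite -mem_index_iota.
case: (boolP (G l)) => [gl|_]; last by apply.
have := hu l l0; rewrite -!mem_index_iota => /(_ hl hl0 gl g0) e.
by rewrite e eqxx in ne.
Qed.

End SumBounds.

Lemma eventually_zero_lengths (s : nat -> bool) (T : nat) : 0 < T ->
  s T.-1 -> (forall n, T <= n -> s n = false) ->
  transient_length s T /\ cycle_length s 1.
Proof.
move=> T0 sT zero.
have per : periodic_from s T 1 by split => // n hn; rewrite !zero //; lia.
have tr : transient_length s T.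
  split; first by exists 1.
  move=> T' [P [P0 hP]]; rewrite leqNgt; apply/negP => lt.
  have iter j : s (T.-1 + j * P) = s T.-1.
    elim: j => [|j IHj]; first by rewrite addn0.
    by rewrite mulSn [P + _]addnC addnA hP ?IHj //; lia.
  by move: sT; rewrite -(iter T) zero //; nia.
by split => //; exists T; do 2!split => //; move=> P' [P0 _].
Qed.

Definition hit (p d a : nat) : bool := (d < a) && (p %| a - d).

Lemma hit_dvd p d a : hit p d a -> (p %| a) = (p %| d).
Proof. by move=> /andP [da pd]; rewrite -(subnK (ltnW da)) dvdn_addr. Qed.

Lemma hit_sub p d a b : hit p d a -> hit p d b -> p %| b - a.
Proof.
move=> /andP [da pa] /andP [db pb].
have -> : b - a = (b - d) - (a - d) by lia.
exact: dvdn_sub.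
Qed.

Lemma hit_mul p d l : 0 < p -> p %| d -> hit p d (l * p) = (d %/ p < l).
Proof.
move=> p0 pd; rewrite /hit -{1 2}(divnK pd) ltn_pmul2r // -mulnBl dvdn_mull //.
by rewrite andbT.
Qed.

Section VSequence.
Variables (m i : nat).
Hypotheses (hm : 0 < m) (hrho : 2 <= rho m) (hi : i < rho m).

Let p := pr m i.
Let k := kk m.

Lemma kk_pos : 0 < k.
Proof. by rewrite /k /kk; nia. Qed.

Lemma pr_pos : 0 < p.
Proof. by have [/prime_gt0] := pr_spec hi. Qed.

Lemma x_init_below a : 0 < a <= k -> x_init m i (k - a) = (p %| a).
Proof.
move=> /andP [a0 ak]; have p0 := pr_pos.
have hk : beta m i + mu m i * p = k.
  by rewrite /beta /mu -/p -/k mulnC subnK // leq_divM.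
have hmu : a %/ p <= mu m i by rewrite /mu leq_div2r.
rewrite /x_init -/p; apply/hasP/idP => [[l] | pa].
  rewrite mem_iota add0n => /andP [_ hl] /eqP e.
  have -> : a = (mu m i - l) * p by rewrite mulnBl; lia.
  exact: dvdn_mull.
have hq : 0 < a %/ p by rewrite divn_gt0 // dvdn_leq.
exists (mu m i - a %/ p); first by rewrite mem_iota; lia.
apply/eqP; have := divnK pa.
have : a %/ p * p <= mu m i * p by rewrite leq_mul2r hmu orbT.
rewrite mulnBl; lia.
Qed.

Lemma x_init_window j l : j < rho m -> 0 < l <= 2 * rho m ->
  x_init m i (k - l * pr m j) = (i == j).
Proof.
move=> hj /andP [l0 l2]; have [/prime_gt0 pj0 _ _] := pr_spec hj.
have hlk : 0 < l * pr m j <= k by rewrite muln_gt0 l0 pj0 mul_pr_le_kk.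
by rewrite x_init_below // pr_dvd_mul // l0 /=; have := pr_gt_2rho hi; lia.
Qed.

Lemma xseq_window j l : j < rho m -> 0 < l <= 2 * rho m ->
  xseq m i (k - l * pr m j) = (i == j).
Proof.
move=> hj hl; rewrite /xseq (thr_seqE kk_pos) ifT ?x_init_window //.
have [/prime_gt0 pj0 _ _] := pr_spec hj.
by have := mul_pr_le_kk hj (andP hl).2; rewrite -/k; nia.
Qed.

(* The first value of x computed by the recurrence is 1: the window sees every
   multiple l p_i, whose weights add up exactly to the threshold. *)
Lemma xseq_kk : xseq m i k = true.
Proof.
have self : (\sum_(1 <= l < (2 * rho m).+1)
    wt (rho m) l * Posz (xseq m i (k - l * pr m i)%N) = Posz (2 * rho m)%N)%R.
  rewrite -sum_wt //; apply: eq_big_nat => l hl.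
  by rewrite xseq_window // eqxx mulr1.
have other (j : 'I_(rho m)) : j != Ordinal hi -> (\sum_(1 <= l < (2 * rho m).+1)
    wt (rho m) l * Posz (xseq m i (k - l * pr m j)%N) = 0)%R.
  move=> ne; have ij : (i == j) = false.
    by apply/negbTE; move: ne; apply: contra => /eqP e; apply/eqP/val_inj.
  by rewrite big_nat big1 // => l hl; rewrite xseq_window // ij mulr0.
rewrite {1}/xseq (thr_seqE kk_pos) ltnn wsumE /wsum_by_prime.
by rewrite (bigD1 (Ordinal hi)) //= self big1 ?addr0 /thetabar ?subrr.
Qed.

Lemma vseq_below n : n < k -> vseq m i n = (n.+1 < k) && (p %| k - n.+1).
Proof.
move=> nk; rewrite /vseq (thr_seqE kk_pos) nk /v_init -/k.
case: ifP => hn; last by rewrite xseq_kk (_ : n.+1 < k = false) //; lia.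
have k2 : 2 <= k by rewrite /k /kk; nia.
have h1 : n.+1 < k by lia.
rewrite h1 /xseq (thr_seqE kk_pos) h1 -{1}(subKn (ltnW h1)) x_init_below //; lia.
Qed.

(* The part of the weighted sum contributed by the multiples of p_j, when the
   ones of the sequence are the positions hit from the window offset d. *)
Definition hit_wsum (d j : nat) : int :=
  \sum_(1 <= l < (2 * rho m).+1) wt (rho m) l * Posz (hit p d (l * pr m j)).

Lemma hit_wsum_le0 d j :
  (forall l, 0 < l <= 2 * rho m -> ~~ hit p d (l * pr m j)) -> (hit_wsum d j <= 0)%R.
Proof.
move=> nh; rewrite /hit_wsum big_nat; apply: sumr_le0 => l hl.
by rewrite (negbTE (nh l hl)) mulr0.
Qed.

(* If p | d, the multiples of p_i are hit exactly beyond d / p >= 1. *)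
Lemma hit_wsum_self_dvd d : 0 < d -> p %| d ->
  (hit_wsum d i <= Posz (2 * rho m) - 2)%R.
Proof.
move=> d0 pd; have p0 := pr_pos.
rewrite /hit_wsum (eq_big_nat _ _ (F2 := fun l => wt (rho m) l * Posz (d %/ p < l))%R).
  by apply: sum_wt_tail => //; rewrite divn_gt0 // dvdn_leq.
by move=> l _; rewrite -/p hit_mul.
Qed.

(* If p | d, only multiples of p can be hit, and no l p_j with j != i is one. *)
Lemma hit_wsum_other_dvd d j : j < rho m -> j != i -> p %| d ->
  (hit_wsum d j <= 0)%R.
Proof.
move=> hj ji pd; apply: hit_wsum_le0 => l hl; apply/negP => /hit_dvd.
rewrite eq_sym in ji; rewrite pd pr_dvd_mul ?(negbTE ji) //.
by case/andP: hl => -> /=; have := pr_gt_2rho hi; lia.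
Qed.

(* If p does not divide d, no multiple of p is hit. *)
Lemma hit_wsum_self_ndvd d : ~~ (p %| d) -> (hit_wsum d i <= 0)%R.
Proof.
move=> pd; apply: hit_wsum_le0 => l _; apply/negP => /hit_dvd.
by rewrite dvdn_mull // (negbTE pd).
Qed.

(* For j != i at most one multiple l p_j is hit: two of them would differ by
   a multiple of p_i smaller than p_i p_j. *)
Lemma hit_wsum_other d j : j < rho m -> j != i -> (hit_wsum d j <= 2)%R.
Proof.
move=> hj; rewrite eq_sym => ji.
apply: (sum_le_one_active (G := fun l => hit p d (l * pr m j))) => //.
  have no_two a b : 0 < a -> a < b -> b <= 2 * rho m ->
      hit p d (a * pr m j) -> hit p d (b * pr m j) -> False.
    move=> a0 ab b2 ga gb; have := hit_sub ga gb.
    rewrite -mulnBl pr_dvd_mul ?(negbTE ji) //.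
    by have := pr_gt_2rho hi; lia.
  move=> l1 l2 /andP [l10 l12] /andP [l20 l22] g1 g2.
  by case: (ltngtP l1 l2) => // lt; exfalso; [apply: (no_two l1 l2) | apply: (no_two l2 l1)].
by move=> l _; case: ifP => _; rewrite ?mulr0 // mulr1 wt_le2.
Qed.

Lemma hit_wsum_total d : 0 < d -> (\sum_(j < rho m) hit_wsum d j <= Posz (2 * rho m) - 2)%R.
Proof.
move=> d0; have ne (j : 'I_(rho m)) : j != Ordinal hi -> val j != i.
  by apply: contra => /eqP e; apply/eqP/val_inj.
pose S (j : 'I_(rho m)) := hit_wsum d j.
have [pd|npd] := boolP (p %| d).
  have := sum_ord_bound (i0 := Ordinal hi) (S := S) (z := 0) (hit_wsum_self_dvd d0 pd).
  by rewrite mul0rn addr0; apply=> j /ne ji; apply: hit_wsum_other_dvd.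
have := sum_ord_bound (i0 := Ordinal hi) (S := S) (z := 2) (hit_wsum_self_ndvd npd).
move/(_ _)/le_trans; apply=> [j /ne ji|]; first exact: hit_wsum_other.
rewrite add0r -mulr_natr; lia.
Qed.

Lemma vseq_window t j l : k <= t -> (forall s, k <= s < t -> vseq m i s = false) ->
  j < rho m -> 0 < l <= 2 * rho m ->
  vseq m i (t - l * pr m j) = hit p (t.+1 - k) (l * pr m j).
Proof.
move=> kt zero hj hl; have [/prime_gt0 pj0 _ _] := pr_spec hj.
have hlk := mul_pr_le_kk hj (andP hl).2; rewrite -/k in hlk.
have lp0 : 0 < l * pr m j by rewrite muln_gt0 (andP hl).1.
rewrite /hit; move: (l * pr m j) lp0 hlk => a a0 ak.
case: (ltnP (t - a) k) => h.
  rewrite vseq_below //.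
  have -> : k - (t - a).+1 = a - (t.+1 - k) by lia.
  by have -> : (t - a).+1 < k = (t.+1 - k < a) by lia.
have hs : k <= t - a < t by apply/andP; split; lia.
have -> : t.+1 - k < a = false by lia.
by rewrite zero.
Qed.

Lemma vseq_zero t : k <= t ->
  vseq m i t = false /\ (wsum m (vseq m i) t <= thetabar m - Posz 2)%R.
Proof.
elim/ltn_ind: t => t IH kt.
have hw : (wsum m (vseq m i) t <= Posz (2 * rho m) - 2)%R.
  rewrite wsumE (_ : wsum_by_prime _ _ _ = \sum_(j < rho m) hit_wsum (t.+1 - k) j)%R.
    by apply: hit_wsum_total; lia.
  apply: eq_bigr => j _; apply: eq_big_nat => l hl.
  by rewrite vseq_window // => s /andP [ks st]; apply: (IH s st ks).1.
split => //; move: hw; rewrite /vseq (thr_seqE kk_pos) ltnNge kt /= /ind /thetabar.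
by move: (wsum _ _ _) => W hw; apply/negbTE; rewrite -ltNge; lia.
Qed.

Lemma pr_lt_kk : p < k.
Proof. by have [_ _ h] := pr_spec hi; rewrite /k /kk -/p; nia. Qed.

Lemma vseq_tail n : k - p <= n -> vseq m i n = false.
Proof.
move=> hn; case: (ltnP n k) => [nk | kn]; last by case: (vseq_zero kn).
rewrite vseq_below //; apply/negP => /andP [n1 /dvdn_leq].
by have := pr_pos; lia.
Qed.

Lemma vseq_last_one : vseq m i (k - p).-1 = true.
Proof.
have := pr_lt_kk; have := pr_pos => p0 pk.
rewrite vseq_below; last lia.
by rewrite (_ : k - (k - p).-1.+1 = p) ?dvdnn ?andbT //; lia.
Qed.
End VSequence.

Theorem lemma10 (m i : nat) (hm : 0 < m) (hrho : 2 <= rho m) (hi : i < rho m) :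
  (forall t, kk m <= t ->
     vseq m i t = false /\
     (wsum m (vseq m i) t <= thetabar m - Posz 2)%R) /\
  transient_length (vseq m i) (kk m - pr m i) /\
  cycle_length (vseq m i) 1.
Proof.
split; first exact: vseq_zero.
apply: eventually_zero_lengths.
- by rewrite subn_gt0 pr_lt_kk.
- exact: vseq_last_one.
- exact: vseq_tail.
Qed.
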